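(* Let $G=(V,E)$ and $\hat G=(V,\hat E)$ be connected graphs with $\hat E\subseteq E$, let $A\subseteq V$ be nonempty and let $U\subseteq V$. If $\delta(u,v)=\hat\delta(u,v)$ for every pair $(u,v)\in\Big(\bigcup_{a\in A}\hat N_2(a)\Big)\times U$, then $D_a=\hat D_a$ for every $a\in A$.
   Context: $\delta$, $\hat\delta$ are the shortest-path metrics of the unweighted graphs $G$, $\hat G$. For $S\subseteq V$, $\delta(S,v)=\min_{s\in S}\delta(s,v)$ and similarly for $\hat\delta$. $N_2(a)=\{u\in V:\delta(u,a)\le2\}$ and $\hat N_2(a)=\{u\in V:\hat\delta(u,a)\le2\}$. For $w\in V$, $C_A(w)=\{v\in V:\delta(w,v)<\delta(A,v)\}$ and $\hat C_A(w)=\{v\in V:\hat\delta(w,v)<\hat\delta(A,v)\}$. For $a\in A$, $D_a=\Big(\bigcup_{b\in N_2(a)}C_A(b)\cup N_2(a)\Big)\cap U$ and $\hat D_a=\Big(\bigcup_{b\in \hat N_2(a)}\hat C_A(b)\cup \hat N_2(a)\Big)\cap U$. *)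

From mathcomp Require Import all_boot.
Set Implicit Arguments. Unset Strict Implicit. Unset Printing Implicit Defensive.

Section Graphs.
Variable T : finType.

Definition simple_graph (e : rel T) : Prop := symmetric e /\ irreflexive e.

Definition connected_graph (e : rel T) : Prop := forall x y : T, connect e x y.

Definition walk_of_length (e : rel T) (n : nat) (x y : T) : bool :=
  [exists p : n.-tuple T, path e x p && (last x p == y)].

(* Shortest-path distance delta(x,y): least n with a walk of length n from x to y.
   (Every shortest walk in a connected graph has fewer than #|T| edges, so the
   search range iota 0 #|T| suffices; unreachable pairs would get #|T|.) *)
Definition dist (e : rel T) (x y : T) : nat :=
  find (fun n => walk_of_length e n x y) (iota 0 #|T|).

(* delta(S,v) = min_{s in S} delta(s,v)  (only used for nonempty S). *)
Definition setdist (e : rel T) (S : {set T}) (v : T) : nat :=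
  \big[minn/#|T|]_(s in S) dist e s v.

Definition N2 (e : rel T) (a : T) : {set T} := [set u | dist e u a <= 2].

Definition Cl (e : rel T) (A : {set T}) (w : T) : {set T} :=
  [set v | dist e w v < setdist e A v].

Definition Dset (e : rel T) (A U : {set T}) (a : T) : {set T} :=
  ((\bigcup_(b in N2 e a) Cl e A b) :|: N2 e a) :&: U.

End Graphs.

From mathcomp Require Import all_boot.
From mathcomp Require Import zify.

(* The theorem then follows from two inclusions, fixing v in U:
   - D^_a <= D_a: every b in N^_2(a) lies in N_2(a) (fewer edges, longer
     distances) and the agreement hypothesis turns C^_A(b) into C_A(b), since
     A itself is contained in U_{a in A} N^_2(a), so delta(A,v) = delta^(A,v).
   - D_a <= D^_a: if v is not in N^_2(a), let q be the point reached after two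
     steps on a shortest a-v walk of G^.  Then for b in N_2(a) with v in C_A(b),
     delta^(q,v) <= delta^(a,v) - 2 = delta(a,v) - 2 <= delta(b,v)
     < delta(A,v) = delta^(A,v), so v lies in C^_A(q) with q in N^_2(a). *)

Set Implicit Arguments.
Unset Strict Implicit.
Unset Printing Implicit Defensive.

Section Walks.
Variables (T : finType) (e : rel T).

Lemma walkP n x y :
  reflect (exists2 p : seq T, size p = n & path e x p && (last x p == y))
          (walk_of_length e n x y).
Proof.
apply: (iffP existsP) => [[p Hp] | [p Hsize Hp]].
  by exists (val p); rewrite ?size_tuple.
have Hsz : size p == n by apply/eqP.
by exists (Tuple Hsz).
Qed.

Lemma walk_cat m n x y z :
  walk_of_length e m x y -> walk_of_length e n y z ->
  walk_of_length e (m + n) x z.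
Proof.
move=> /walkP [p <- /andP [Hp /eqP Hpy]] /walkP [q <- /andP [Hq Hqz]].
apply/walkP; exists (p ++ q); first by rewrite size_cat.
by rewrite cat_path last_cat Hp Hpy Hq.
Qed.

Lemma walk_split m n x y :
  walk_of_length e (m + n) x y ->
  exists2 q, walk_of_length e m x q & walk_of_length e n q y.
Proof.
move=> /walkP [p Hsize]; rewrite -{1 2}(cat_take_drop m p) cat_path last_cat.
case/andP => /andP [Htake Hdrop] Hlast.
exists (last x (take m p)); apply/walkP.
- exists (take m p); last by rewrite Htake eqxx.
  by rewrite size_takel // Hsize leq_addr.
- by exists (drop m p); rewrite ?Hdrop // size_drop Hsize addKn.
Qed.

Lemma walk_rev n x y :
  symmetric e -> walk_of_length e n x y -> walk_of_length e n y x.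
Proof.
move=> Se /walkP [p Hsize /andP [Hp /eqP Hpy]].
apply/walkP; exists (rev (belast x p)); first by rewrite size_rev size_belast.
rewrite -Hpy rev_path (sub_path _ Hp) => [|u w]; last by rewrite Se.
by case: p {Hsize Hp Hpy} => //= w p; rewrite rev_cons last_rcons.
Qed.

End Walks.

Section Distances.
Variable T : finType.
Implicit Types (e : rel T) (x y z : T).

Lemma dist_le e n x y : walk_of_length e n x y -> dist e x y <= n.
Proof.
move=> W; rewrite /dist; have [Hn | Hn] := ltnP n #|T|.
  rewrite leqNgt; apply/negP => Hlt.
  by have := before_find 0 Hlt; rewrite nth_iota // add0n W.
by apply: leq_trans (find_size _ _) _; rewrite size_iota.
Qed.

(* In a connected graph, [dist] is realised by a walk: a shortest walk is
   duplicate-free, hence shorter than #|T|, so the search finds it. *)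
Lemma dist_walk e x y :
  connected_graph e -> walk_of_length e (dist e x y) x y.
Proof.
move=> Ce; case/connectP: (Ce x y) => p Hp ->.
case: (shortenP Hp) => p' Hp' Hu _.
have Hsz : size p' < #|T| by have := max_card (mem (x :: p')); rewrite (card_uniqP Hu).
have Hhas : has (fun n => walk_of_length e n x (last x p')) (iota 0 #|T|).
  apply/hasP; exists (size p'); first by rewrite mem_iota.
  by apply/walkP; exists p' => //; rewrite Hp' eqxx.
have := nth_find 0 Hhas; rewrite has_find size_iota in Hhas.
by rewrite nth_iota // add0n.
Qed.

Lemma dist_self e x : dist e x x = 0.
Proof. by apply/eqP; rewrite -leqn0; apply: dist_le; apply/walkP; exists [::] => //=; rewrite eqxx. Qed.

Lemma N2_self e x : x \in N2 e x.
Proof. by rewrite inE dist_self. Qed.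

Lemma dist_sym e x y :
  symmetric e -> connected_graph e -> dist e x y = dist e y x.
Proof.
by move=> Se Ce; apply/eqP; rewrite eqn_leq !dist_le // walk_rev // dist_walk.
Qed.

Lemma dist_triangle e x y z :
  connected_graph e -> dist e x z <= dist e x y + dist e y z.
Proof. by move=> Ce; apply/dist_le/walk_cat; apply: dist_walk. Qed.

Lemma dist_subrel e e' x y :
  subrel e' e -> connected_graph e' -> dist e x y <= dist e' x y.
Proof.
move=> Hsub Ce'; apply: dist_le.
have /walkP [p Hsize /andP [Hp Hpy]] := dist_walk x y Ce'.
by apply/walkP; exists p; rewrite // (sub_path Hsub Hp).
Qed.

Lemma dist_midpoint e k x y :
  connected_graph e -> k <= dist e x y ->
  exists2 q, dist e x q <= k & dist e q y <= dist e x y - k.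
Proof.
move=> Ce Hk; have W := dist_walk x y Ce; rewrite -(subnKC Hk) in W.
by case: (walk_split W) => q W1 W2; exists q; apply: dist_le.
Qed.

End Distances.

Section Agreement.
Variables (T : finType) (e ehat : rel T) (A U : {set T}).
Hypotheses (Se : symmetric e) (Sh : symmetric ehat).
Hypotheses (Ce : connected_graph e) (Ch : connected_graph ehat).
Hypothesis Hsub : subrel ehat e.
Hypothesis Hagree : forall u v : T, u \in \bigcup_(a in A) N2 ehat a ->
  v \in U -> dist e u v = dist ehat u v.

Lemma agree_near a u v :
  a \in A -> u \in N2 ehat a -> v \in U -> dist e u v = dist ehat u v.
Proof. by move=> Ha Hu; apply: Hagree; apply/bigcupP; exists a. Qed.

(* A is covered by the N^_2(a), so the distances to A agree on U. *)
Lemma setdist_agree v : v \in U -> setdist e A v = setdist ehat A v.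
Proof. by move=> Hv; apply: eq_bigr => s Hs; rewrite (agree_near Hs (N2_self _ _)). Qed.

Lemma N2_agree a v : a \in A -> v \in U -> (v \in N2 e a) = (v \in N2 ehat a).
Proof.
move=> Ha Hv; rewrite !inE (dist_sym v a Se Ce) (dist_sym v a Sh Ch).
by rewrite (agree_near Ha (N2_self _ _) Hv).
Qed.

Lemma Dset_hat_sub a : a \in A -> {subset Dset ehat A U a <= Dset e A U a}.
Proof.
move=> Ha v; rewrite !in_setI !in_setU => /andP [Hv' Hv]; rewrite Hv andbT.
case/orP: Hv' => [/bigcupP [b Hb Hbv] | HvN]; last by rewrite (N2_agree Ha Hv) HvN orbT.
apply/orP; left; apply/bigcupP; exists b.
  by move: Hb; rewrite !inE; apply: leq_trans; apply: dist_subrel.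
by move: Hbv; rewrite !inE (setdist_agree Hv) (agree_near Ha Hb Hv).
Qed.

(* D_a <= D^_a: a vertex v of D_a outside N^_2(a) lies in C^_A(q) for the
   point q two steps from a on a shortest a-v walk of G^. *)
Lemma Dset_sub_hat a : a \in A -> {subset Dset e A U a <= Dset ehat A U a}.
Proof.
move=> Ha v; rewrite !in_setI !in_setU => /andP [Hv' Hv]; rewrite Hv andbT.
case/orP: Hv' => [/bigcupP [b Hb Hbv] | HvN]; last by rewrite -(N2_agree Ha Hv) HvN orbT.
have [Hnear | Hfar] := leqP (dist ehat a v) 2.
  by rewrite inE (dist_sym v a Sh Ch) Hnear orbT.
have [q Haq Hqv] := dist_midpoint Ch (ltnW Hfar).
apply/orP; left; apply/bigcupP; exists q; first by rewrite inE (dist_sym q a Sh Ch).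
(* lia combines d(a,v) = d^(a,v), the triangle inequality through b and
   the bounds on q. *)
have Hav := agree_near Ha (N2_self _ _) Hv.
have Habv := dist_triangle a b v Ce.
move: Hb Hbv; rewrite !inE -(setdist_agree Hv) (dist_sym b a Se Ce); lia.
Qed.

End Agreement.

Theorem lemma7 (T : finType) (e ehat : rel T) (A U : {set T})
  (He : simple_graph e) (Hehat : simple_graph ehat)
  (Ce : connected_graph e) (Cehat : connected_graph ehat)
  (Hsub : subrel ehat e)
  (HA : A != set0)
  (Hagree : forall u v : T, u \in \bigcup_(a in A) N2 ehat a -> v \in U ->
              dist e u v = dist ehat u v) :
  forall a : T, a \in A -> Dset e A U a = Dset ehat A U a.
Proof.
move=> a Ha; case: He => Se _; case: Hehat => Sh _.
apply/setP => v; apply/idP/idP.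
- exact: (Dset_sub_hat Se Sh Ce Cehat Hagree Ha).
- exact: (Dset_hat_sub Se Sh Ce Cehat Hsub Hagree Ha).
Qed.
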